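(* Let $G$ be a torsion abelian group. If there exists a surjective endomorphism $\varphi\colon G\to G$ that is positively expansive, then $G$ is finite.
   Context: $\mathbb N=\{0,1,2,\dots\}$. An endomorphism $\varphi\colon G\to G$ of an abelian group is positively expansive if there is a finite subgroup $S\leq G$ such that for every finite subgroup $F\leq G$ there is $n\in\mathbb N$ with $F\subseteq\sum_{k=0}^n\varphi^kS$. *)

(* abelian groups are zmodTypes (written additively). *)
From HB Require Import structures.
From mathcomp Require Import all_boot all_order all_algebra.
Set Implicit Arguments. Unset Strict Implicit. Unset Printing Implicit Defensive.
Import GRing.Theory.
Local Open Scope ring_scope.

Section Defs.
Variable G : zmodType.

Definition torsion_group : Prop :=
  forall x : G, exists n : nat, (0 < n)%N /\ x *+ n = 0.

Definition is_subgroup (S : G -> Prop) : Prop :=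
  S 0 /\ (forall x y, S x -> S y -> S (x - y)).

Definition finite_subset (S : G -> Prop) : Prop :=
  exists s : seq G, forall x, S x <-> x \in s.

Definition finite_subgroup (S : G -> Prop) : Prop :=
  is_subgroup S /\ finite_subset S.

Definition iter_sum (phi : G -> G) (S : G -> Prop) (n : nat) : G -> Prop :=
  fun x => exists f : nat -> G,
    (forall k, (k <= n)%N -> S (f k)) /\
    x = \sum_(0 <= k < n.+1) iter k phi (f k).

Definition positively_expansive (phi : G -> G) : Prop :=
  exists S : G -> Prop, finite_subgroup S /\
    forall F : G -> Prop, finite_subgroup F ->
      exists n : nat, forall x, F x -> iter_sum phi S n x.

Definition finite_group : Prop := exists s : seq G, forall x : G, x \in s.

End Defs.

From mathcomp Require Import all_boot all_order all_algebra.
From Stdlib Require Import Setoid.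
Set Implicit Arguments. Unset Strict Implicit. Unset Printing Implicit Defensive.
Import GRing.Theory.
Local Open Scope ring_scope.

(* Write K_n for sum_{k <= n} phi^k S, so that K_0 = S and K_(n+1) = S + phi K_n.
   Since G is torsion, every finite subset lies in a finite subgroup; hence, phi
   being onto, a finite set of preimages of the elements of S lies in some K_n,
   that is, S is contained in phi K_n.  Then K_n is contained in
   K_(n+1) = S + phi K_n, which is contained in phi K_n; as K_n is finite,
   phi maps K_n onto itself.  Consequently K_m is contained in K_n for every m,
   and since each element of G lies in some K_m, G = K_n is finite. *)

Lemma sub_map_closed (T : eqType) (f : T -> T) (s : seq T) :
  {subset s <= map f s} -> {subset map f s <= s}.
Proof.
move=> s_sub_fs; pose u := undup s.
have u_sub_fu : {subset u <= map f u}.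
  move=> x; rewrite mem_undup => /s_sub_fs /mapP [y ys ->].
  by apply: map_f; rewrite mem_undup.
have [_ fu_eq_u] := uniq_min_size (undup_uniq s) u_sub_fu (eq_leq (size_map f u)).
by move=> _ /mapP [y ys ->]; rewrite -mem_undup fu_eq_u map_f ?mem_undup.
Qed.

Lemma surj_preimage_seq (T U : Type) (f : T -> U) (s : seq U) :
  (forall y, exists x, f x = y) -> exists s', map f s' = s.
Proof.
move=> f_surj; elim: s => [|y s [s' <-]]; first by exists [::].
by have [x <-] := f_surj y; exists (x :: s').
Qed.

Section FiniteSubgroups.
Variable G : zmodType.

Lemma subgroupD (S : G -> Prop) :
  is_subgroup S -> forall x y, S x -> S y -> S (x + y).
Proof.
case=> S0 SB x y Sx Sy.
by have := SB x (0 - y) Sx (SB 0 y S0 Sy); rewrite sub0r opprK.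
Qed.

Lemma mulrn_modn (x : G) (N i : nat) : x *+ N = 0 -> x *+ i = x *+ (i %% N).
Proof.
by move=> xN; rewrite {1}(divn_eq i N) mulrnDr mulnC mulrnA xN mul0rn add0r.
Qed.

Lemma oppr_torsion (x : G) (N : nat) : (0 < N)%N -> x *+ N = 0 -> - x = x *+ N.-1.
Proof.
move=> N_gt0 xN; by apply: (addrI x); rewrite subrr -mulrS prednK.
Qed.

Definition adjoin (F : G -> Prop) (x : G) : G -> Prop :=
  fun y => exists h i, F h /\ y = h + x *+ i.

Lemma adjoin_finite_subgroup (F : G -> Prop) (x : G) (N : nat) :
  (0 < N)%N -> x *+ N = 0 -> finite_subgroup F -> finite_subgroup (adjoin F x).
Proof.
move=> N_gt0 xN [[F0 FB] [hs Fhs]]; split; first split.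
- by exists 0, 0%N; rewrite addr0.
- move=> _ _ [h1 [i1 [Fh1 ->]]] [h2 [i2 [Fh2 ->]]].
  exists (h1 - h2), (i1 + N.-1 * i2)%N; split; first exact: FB.
  by rewrite opprD -mulNrn (oppr_torsion N_gt0 xN) -mulrnA mulrnDr addrACA.
- exists [seq h + x *+ i | h <- hs, i <- iota 0 N] => y; split.
  + case=> h [i [Fh ->]]; apply/allpairsP; exists (h, i %% N)%N => /=.
    split; [exact/Fhs | by rewrite mem_iota ltn_mod N_gt0 | by rewrite -(mulrn_modn _ xN)].
  + by case/allpairsP => [[h i] /= [/Fhs Fh _ ->]]; exists h, i.
Qed.

Lemma adjoin_sub (F : G -> Prop) x y : F y -> adjoin F x y.
Proof. by exists y, 0%N; rewrite addr0. Qed.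

Lemma adjoin_gen (F : G -> Prop) x : is_subgroup F -> adjoin F x x.
Proof. by case=> F0 _; exists 0, 1%N; rewrite add0r. Qed.

Lemma torsion_finite_subgroup_seq (s : seq G) :
  torsion_group G -> exists F, finite_subgroup F /\ forall x, x \in s -> F x.
Proof.
move=> torsG; elim: s => [|x s [F [finF Fs]]].
  exists (eq^~ 0); split=> //; split.
    by split=> // _ _ -> ->; rewrite subr0.
  by exists [:: 0] => y; rewrite inE; split=> [->|/eqP].
have [N [N_gt0 xN]] := torsG x.
exists (adjoin F x); split; first exact: (adjoin_finite_subgroup N_gt0 xN finF).
move=> y; rewrite inE => /orP [/eqP -> | ys]; last exact/adjoin_sub/Fs.
by apply: adjoin_gen; case: finF.
Qed.

End FiniteSubgroups.

Section IterSum.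
Variables (G : zmodType) (phi : {additive G -> G}) (S : G -> Prop).
Hypothesis subgroupS : is_subgroup S.

Local Notation K := (iter_sum phi S).

Lemma iter_sum0 x : K 0 x <-> S x.
Proof.
split; first by case=> f [Sf ->]; rewrite big_nat1; apply: Sf.
by move=> Sx; exists (fun=> x); split=> //; rewrite big_nat1.
Qed.

Lemma iter_sumS n x :
  K n.+1 x <-> exists s y, S s /\ K n y /\ x = s + phi y.
Proof.
split.
- case=> f [Sf ->]; exists (f 0%N), (\sum_(0 <= k < n.+1) iter k phi (f k.+1)).
  split; first exact: Sf.
  split; first by exists (fun k => f k.+1); split=> // k k_le_n; apply: Sf.
  by rewrite big_nat_recl // raddf_sum.
- case=> s [y [Ss [[g [Sg ->]] ->]]].
  exists (fun k => if k is k'.+1 then g k' else s); split; first by case.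
  by rewrite [RHS]big_nat_recl //= raddf_sum.
Qed.

Lemma iter_sumD n x y : K n x -> K n y -> K n (x + y).
Proof.
elim: n x y => [|n IHn] x y; first by rewrite !iter_sum0; apply: subgroupD.
rewrite !iter_sumS => [[s1 [y1 [Ss1 [Ky1 ->]]]]] [s2 [y2 [Ss2 [Ky2 ->]]]].
exists (s1 + s2), (y1 + y2); split; first exact: subgroupD.
by split; [apply: IHn | rewrite raddfD addrACA].
Qed.

Lemma iter_sum_subS n x : K n x -> K n.+1 x.
Proof.
case: subgroupS => S0 _; elim: n x => [|n IHn] x.
  by rewrite iter_sum0 iter_sumS => Sx; exists x, 0; rewrite iter_sum0 raddf0 addr0.
rewrite iter_sumS => [[s [y [Ss [Ky ->]]]]].
by rewrite iter_sumS; exists s, y; split; [|split; [apply: IHn|]].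
Qed.

Lemma iter_sum_finite n : finite_subset S -> finite_subset (K n).
Proof.
case=> ss Sss; elim: n => [|n [kn Kkn]]; first by exists ss => x; rewrite iter_sum0.
exists [seq s + phi y | s <- ss, y <- kn] => x; rewrite iter_sumS; split.
- case=> s [y [Ss [Ky ->]]]; apply/allpairsP; exists (s, y).
  by split; [apply/Sss | apply/Kkn |].
- by case/allpairsP => [[s y] /= [/Sss Ss /Kkn Ky ->]]; exists s, y.
Qed.

Section Stable.
Variable n : nat.
Hypothesis S_sub_phiK : forall s, S s -> exists2 y, K n y & phi y = s.
Hypothesis finS : finite_subset S.

Lemma iter_sum_sub_phi x : K n x -> exists2 y, K n y & phi y = x.
Proof.
move=> /iter_sum_subS; rewrite iter_sumS => [[s [y [Ss [Ky ->]]]]].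
have [z Kz <-] := S_sub_phiK Ss.
by exists (z + y); [apply: iter_sumD | rewrite raddfD].
Qed.

Lemma iter_sum_phi_closed x : K n x -> K n (phi x).
Proof.
have [kn Kkn] := iter_sum_finite n finS.
have kn_sub : {subset kn <= map phi kn}.
  by move=> y /Kkn /iter_sum_sub_phi [z /Kkn zkn <-]; apply: map_f.
by move=> /Kkn xkn; apply/Kkn/(sub_map_closed kn_sub)/map_f.
Qed.

Lemma iter_sum_sub_stable m x : K m x -> K n x.
Proof.
have S_sub_Kn s : S s -> K n s.
  by case/S_sub_phiK => y Ky <-; apply: iter_sum_phi_closed.
elim: m x => [|m IHm] x; first by rewrite iter_sum0; apply: S_sub_Kn.
rewrite iter_sumS => [[s [y [Ss [Ky ->]]]]].
by apply: iter_sumD; [apply: S_sub_Kn | apply/iter_sum_phi_closed/IHm].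
Qed.

End Stable.
End IterSum.

Theorem theorem4p2 (G : zmodType) (phi : {additive G -> G}) :
  torsion_group G ->
  (forall y : G, exists x : G, phi x = y) ->
  positively_expansive phi ->
  finite_group G.
Proof.
move=> torsG phi_surj [S [[subgroupS finS] expand]].
have [ss Sss] := finS.
have [ss' phi_ss'] := surj_preimage_seq ss phi_surj.
have [F [finF Fss']] := torsion_finite_subgroup_seq ss' torsG.
have [n F_sub_Kn] := expand F finF.
have S_sub_phiK s : S s -> exists2 y, iter_sum phi S n y & phi y = s.
  rewrite Sss -phi_ss' => /mapP [y yss' ->].
  by exists y => //; apply/F_sub_Kn/Fss'.
have [kn Kkn] := iter_sum_finite phi n finS.
exists kn => x; apply/Kkn.
have [Fx [finFx Fxx]] := torsion_finite_subgroup_seq [:: x] torsG.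
have [m Fx_sub_Km] := expand Fx finFx.
apply: (iter_sum_sub_stable subgroupS S_sub_phiK finS (m := m)).
by apply/Fx_sub_Km/Fxx; rewrite inE.
Qed.
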